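(* Let $X \subseteq 2^\omega$ be nice. Then for every Borel function $x \mapsto \langle Y^x, f^x\rangle$ from $2^\omega$ to $[\omega]^\omega \times \omega^\omega$ there exists $g \in \omega^\omega$ such that for every $x \in X$ there are infinitely many $n \in Y^x$ with $f^x(n) = g(n)$.
   Context: $[\omega]^\omega$ denotes the set of infinite subsets of $\omega$, viewed as a subspace of $2^\omega$. A set $X \subseteq 2^\omega$ is nice if for every Borel function $x \mapsto f^x$ from $2^\omega$ to $\omega^\omega$ there exists $g \in \omega^\omega$ such that for every $x \in X$ there are infinitely many $n$ with $f^x(n) = g(n)$. *)

(* Cantor space 2^omega = nat -> bool, Baire space omega^omega = nat -> nat. *)
From Stdlib Require Import Arith.

Inductive sigma_gen {T : Type} (G : (T -> Prop) -> Prop) : (T -> Prop) -> Prop :=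
| sg_base (A : T -> Prop) : G A -> sigma_gen G A
| sg_compl (A : T -> Prop) : sigma_gen G A -> sigma_gen G (fun x => ~ A x)
| sg_union (A : nat -> T -> Prop) :
    (forall n, sigma_gen G (A n)) -> sigma_gen G (fun x => exists n, A n x)
| sg_ext (A B : T -> Prop) :
    (forall x, A x <-> B x) -> sigma_gen G A -> sigma_gen G B.

(* Borel sets of 2^omega: generated by the subbasic clopen sets {x | x n = b}
   (the product topology is second countable, so this is the Borel sigma-algebra). *)
Definition cantor_subbasic (A : (nat -> bool) -> Prop) : Prop :=
  exists n b, forall x, A x <-> x n = b.
Definition borel_cantor := sigma_gen cantor_subbasic.

Definition prod_subbasic (A : (nat -> bool) * (nat -> nat) -> Prop) : Prop :=
  (exists n b, forall p, A p <-> fst p n = b) \/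
  (exists n k, forall p, A p <-> snd p n = k).
Definition borel_prod := sigma_gen prod_subbasic.

Definition baire_subbasic (A : (nat -> nat) -> Prop) : Prop :=
  exists n k, forall f, A f <-> f n = k.
Definition borel_baire := sigma_gen baire_subbasic.

Definition borel_fun_baire (F : (nat -> bool) -> (nat -> nat)) : Prop :=
  forall B, borel_baire B -> borel_cantor (fun x => B (F x)).
Definition borel_fun_prod (F : (nat -> bool) -> (nat -> bool) * (nat -> nat)) : Prop :=
  forall B, borel_prod B -> borel_cantor (fun x => B (F x)).

(* y : nat -> bool, viewed as a subset of omega, is infinite, i.e. y in [omega]^omega. *)
Definition infinite_set (y : nat -> bool) : Prop :=
  forall N, exists n, N <= n /\ y n = true.

Definition nice (X : (nat -> bool) -> Prop) : Prop :=
  forall F : (nat -> bool) -> (nat -> nat), borel_fun_baire F ->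
  exists g : nat -> nat, forall x, X x ->
    forall N, exists n, N <= n /\ F x n = g n.

From Stdlib Require Import Arith.
From Stdlib Require Import Bool List Lia Classical Cantor ConstructiveEpsilon.
Import ListNotations.

(* Let F^x(k) code, as one natural number, the first 2^k pairs (n, f^x(n)) with n in Y^x
   and n >= k. F is Borel, so niceness gives c with c(k) = F^x(k) for infinitely many k.
   Read c(k) as a claim of at most 2^k pairs and let g(n) be the value given to n by the
   first claim mentioning n. The claims before the k-th mention fewer than 2^k positions,
   so when c(k) is correct one of its 2^k distinct positions n >= k is mentioned first by
   the k-th claim, which is true there: n is in Y^x and g(n) = f^x(n). *)

Section SigmaAlgebra.

Variables (T : Type) (G : (T -> Prop) -> Prop).

Lemma sigma_gen_or (A B : T -> Prop) :
  sigma_gen G A -> sigma_gen G B -> sigma_gen G (fun x => A x \/ B x).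
Proof.
  intros HA HB.
  apply sg_ext with (fun x => exists n, match n with 0 => A x | S _ => B x end).
  - intros x; split.
    + intros [[|n] H]; auto.
    + intros [H|H]; [exists 0 | exists 1]; auto.
  - apply sg_union; intros [|n]; auto.
Qed.

Lemma sigma_gen_and (A B : T -> Prop) :
  sigma_gen G A -> sigma_gen G B -> sigma_gen G (fun x => A x /\ B x).
Proof.
  intros HA HB.
  apply sg_ext with (fun x => ~ (~ A x \/ ~ B x)).
  - intros x; destruct (classic (A x)), (classic (B x)); tauto.
  - apply sg_compl, sigma_gen_or; apply sg_compl; assumption.
Qed.

Lemma sigma_gen_const (A : T -> Prop) (P : Prop) :
  sigma_gen G A -> sigma_gen G (fun _ => P).
Proof.
  intros HA.
  assert (Htrue : sigma_gen G (fun x => A x \/ ~ A x))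
    by (apply sigma_gen_or; [|apply sg_compl]; assumption).
  destruct (classic P) as [HP|HP].
  - apply sg_ext with (2 := Htrue); intros x; split; [tauto|intros _; apply classic].
  - apply sg_ext with (2 := sg_compl _ _ Htrue); intros x; split; [|tauto].
    intros H; exfalso; apply H, classic.
Qed.

Lemma sigma_gen_preimage {U : Type} (G' : (U -> Prop) -> Prop) (phi : T -> U) :
  (forall A, G' A -> sigma_gen G (fun x => A (phi x))) ->
  forall B, sigma_gen G' B -> sigma_gen G (fun x => B (phi x)).
Proof.
  intros Hbase B HB; induction HB as [A HA|A _ IH|A _ IH|A B HAB _ IH].
  - auto.
  - apply sg_compl, IH.
  - apply (sg_union _ (fun n x => A n (phi x))), IH.
  - apply sg_ext with (2 := IH); intros x; apply HAB.
Qed.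

End SigmaAlgebra.

Definition update {A : Type} (h : nat -> A) (m : nat) (a : A) : nat -> A :=
  fun i => if i =? m then a else h i.

Lemma update_self {A : Type} (h : nat -> A) m i : update h m (h m) i = h i.
Proof. unfold update; destruct (Nat.eqb_spec i m); congruence. Qed.

Definition depends_below (m : nat) (P : (nat -> bool) -> (nat -> nat) -> Prop) : Prop :=
  forall y y' g g', (forall i, i < m -> y i = y' i /\ g i = g' i) -> P y g -> P y' g'.

Section FinitelyDetermined.

Variables (T : Type) (G : (T -> Prop) -> Prop).
Variables (y : T -> nat -> bool) (g : T -> nat -> nat).
Hypothesis y_measurable : forall m b, sigma_gen G (fun t => y t m = b).
Hypothesis g_measurable : forall m v, sigma_gen G (fun t => g t m = v).

Lemma sigma_gen_depends_below m P :
  depends_below m P -> sigma_gen G (fun t => P (y t) (g t)).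
Proof.
  revert P; induction m as [|m IH]; intros P HP.
  - apply sg_ext with (fun _ => P (fun _ => true) (fun _ => 0)).
    + intros t; split; apply HP; intros i Hi; lia.
    + apply sigma_gen_const with (fun t => y t 0 = true), y_measurable.
  - (* Overwriting coordinate m by its actual value leaves P unchanged, and once that
       value is fixed P only depends on the first m coordinates. *)
    set (Q b v := fun y0 g0 => P (update y0 m b) (update g0 m v)).
    assert (HQ : forall b v, sigma_gen G (fun t => Q b v (y t) (g t))).
    { intros b v; apply IH; intros y0 y0' g0 g0' Hagree; apply HP.
      intros i Hi; unfold update.
      destruct (Nat.eqb_spec i m); [split; reflexivity | apply Hagree; lia]. }
    set (R b v t := y t m = b /\ g t m = v /\ Q b v (y t) (g t)).
    assert (HR : forall b v t, R b v t -> P (y t) (g t)).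
    { intros b v t (<- & <- & HPt).
      apply HP with (2 := HPt); intros i _; rewrite !update_self; auto. }
    apply sg_ext with (fun t => exists v, R true v t \/ R false v t).
    + intros t; split.
      * intros [v [H | H]]; eapply HR; exact H.
      * intros HPt; exists (g t m); unfold R, Q.
        destruct (y t m) eqn:Hb; [left | right]; repeat split; auto;
          rewrite <- Hb; apply HP with (2 := HPt); intros i _; rewrite !update_self; auto.
    + apply sg_union; intros v; unfold R.
      apply sigma_gen_or; repeat apply sigma_gen_and; auto.
Qed.

End FinitelyDetermined.

Definition marked (y : nat -> bool) (k m : nat) : list nat :=
  filter (fun p => (k <=? p) && y p) (seq 0 m).

Definition sample (y : nat -> bool) (g : nat -> nat) (k m : nat) : list (nat * nat) :=
  map (fun p => (p, g p)) (marked y k m).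

Lemma marked_prefix y k m m' : m <= m' -> exists l, marked y k m' = marked y k m ++ l.
Proof.
  intros Hm; unfold marked.
  replace m' with (m + (m' - m)) by lia.
  rewrite seq_app, filter_app; eexists; reflexivity.
Qed.

Lemma marked_unbounded y k : infinite_set y -> forall j, exists m, j <= length (marked y k m).
Proof.
  intros Hy j; induction j as [|j [m Hm]]; [exists 0; lia|].
  destruct (Hy (max m k)) as [p [Hp Hyp]].
  exists (S p).
  assert (Hsucc : marked y k (S p) = marked y k p ++ [p]).
  { unfold marked; rewrite seq_S, filter_app; simpl.
    rewrite Hyp; replace (k <=? p) with true by (symmetry; apply Nat.leb_le; lia).
    reflexivity. }
  destruct (marked_prefix y k m p) as [l Hl]; [lia|].
  rewrite Hsucc, Hl, !length_app; simpl; lia.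
Qed.

Lemma marked_ext y y' k m : (forall i, i < m -> y i = y' i) -> marked y k m = marked y' k m.
Proof.
  intros Hagree; apply filter_ext_in; intros p Hp.
  apply in_seq in Hp; rewrite Hagree by lia; reflexivity.
Qed.

Lemma sample_ext y y' g g' k m :
  (forall i, i < m -> y i = y' i /\ g i = g' i) -> sample y g k m = sample y' g' k m.
Proof.
  intros Hagree; unfold sample.
  rewrite (marked_ext y y') by (intros i Hi; apply Hagree, Hi).
  apply map_ext_in; intros p Hp.
  apply filter_In in Hp as [Hp _]; apply in_seq in Hp.
  rewrite (proj2 (Hagree p ltac:(lia))); reflexivity.
Qed.

Lemma firstn_sample_stable y g k m m' n :
  n <= length (marked y k m) -> n <= length (marked y k m') ->
  firstn n (sample y g k m) = firstn n (sample y g k m').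
Proof.
  assert (Hle : forall m0 m0', m0 <= m0' -> n <= length (marked y k m0) ->
            firstn n (sample y g k m0) = firstn n (sample y g k m0')).
  { intros m0 m0' Hm Hn; destruct (marked_prefix y k m0 m0' Hm) as [l Hl].
    unfold sample; rewrite Hl, map_app, firstn_app, length_map.
    replace (n - length (marked y k m0)) with 0 by lia.
    rewrite app_nil_r; reflexivity. }
  intros Hn Hn'; destruct (Nat.le_ge_cases m m'); [apply Hle | symmetry; apply Hle]; auto.
Qed.

Lemma In_sample y g k m p v : In (p, v) (sample y g k m) -> k <= p /\ y p = true /\ v = g p.
Proof.
  unfold sample; intros Hin; apply in_map_iff in Hin as [q [Hq Hin]].
  injection Hq as <- <-; apply filter_In in Hin as [_ Hq].
  apply andb_prop in Hq as [Hk Hy]; apply Nat.leb_le in Hk; auto.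
Qed.

Lemma NoDup_sample y g k m : NoDup (map fst (sample y g k m)).
Proof.
  unfold sample; rewrite map_map; simpl; rewrite map_id.
  apply NoDup_filter, seq_NoDup.
Qed.

Lemma in_firstn {A : Type} n (l : list A) a : In a (firstn n l) -> In a l.
Proof. intros H; rewrite <- (firstn_skipn n l); apply in_or_app; left; exact H. Qed.

Lemma NoDup_firstn {A : Type} n (l : list A) : NoDup l -> NoDup (firstn n l).
Proof. intros H; rewrite <- (firstn_skipn n l) in H; exact (NoDup_app_remove_r _ _ H). Qed.

Definition window (y : nat -> bool) (k : nat) (Hy : infinite_set y) : nat :=
  proj1_sig (constructive_indefinite_ground_description_nat
               (fun m => 2 ^ k <= length (marked y k m)) (fun m => le_dec _ _)
               (marked_unbounded y k Hy (2 ^ k))).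

Lemma window_spec y k Hy : 2 ^ k <= length (marked y k (window y k Hy)).
Proof. unfold window; destruct constructive_indefinite_ground_description_nat; assumption. Qed.

Definition sample_window (y : nat -> bool) (g : nat -> nat) (k : nat) (Hy : infinite_set y)
  : list (nat * nat) :=
  firstn (2 ^ k) (sample y g k (window y k Hy)).

Lemma In_sample_window y g k Hy p v :
  In (p, v) (sample_window y g k Hy) -> k <= p /\ y p = true /\ v = g p.
Proof. intros H; apply in_firstn in H; exact (In_sample _ _ _ _ _ _ H). Qed.

Lemma NoDup_sample_window y g k Hy : NoDup (map fst (sample_window y g k Hy)).
Proof. unfold sample_window; rewrite <- firstn_map; apply NoDup_firstn, NoDup_sample. Qed.

Lemma length_sample_window y g k Hy : length (sample_window y g k Hy) = 2 ^ k.
Proof.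
  unfold sample_window, sample; rewrite length_firstn, length_map.
  pose proof (window_spec y k Hy); lia.
Qed.

Fixpoint code_pairs (l : list (nat * nat)) : nat :=
  match l with
  | [] => 0
  | a :: l' => S (Cantor.to_nat (Cantor.to_nat a, code_pairs l'))
  end.

Fixpoint decode_pairs_fuel (fuel n : nat) : list (nat * nat) :=
  match fuel, n with
  | S fuel', S n' =>
      let (a, c) := Cantor.of_nat n' in Cantor.of_nat a :: decode_pairs_fuel fuel' c
  | _, _ => []
  end.

Definition decode_pairs (n : nat) : list (nat * nat) := decode_pairs_fuel n n.

Lemma decode_code_pairs l : decode_pairs (code_pairs l) = l.
Proof.
  enough (H : forall fuel, code_pairs l <= fuel -> decode_pairs_fuel fuel (code_pairs l) = l)
    by apply H, le_n.
  induction l as [|a l IH]; intros fuel Hfuel.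
  - destruct fuel; reflexivity.
  - destruct fuel as [|fuel]; cbn [code_pairs decode_pairs_fuel] in Hfuel |- *; [lia|].
    rewrite !Cantor.cancel_of_to; f_equal; apply IH.
    pose proof (Cantor.to_nat_non_decreasing (Cantor.to_nat a) (code_pairs l)); lia.
Qed.

Definition sample_code (Y : (nat -> bool) -> nat -> bool) (f : (nat -> bool) -> nat -> nat)
  (HY : forall x, infinite_set (Y x)) (x : nat -> bool) (k : nat) : nat :=
  code_pairs (sample_window (Y x) (f x) k (HY x)).

Lemma sample_code_borel Y f HY :
  borel_fun_prod (fun x => (Y x, f x)) -> borel_fun_baire (sample_code Y f HY).
Proof.
  intros Hborel.
  assert (HYm : forall m b, borel_cantor (fun x => Y x m = b)).
  { intros m b; apply (Hborel (fun p => fst p m = b)), sg_base; left; exists m, b; tauto. }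
  assert (Hfm : forall m v, borel_cantor (fun x => f x m = v)).
  { intros m v; apply (Hborel (fun p => snd p m = v)), sg_base; right; exists m, v; tauto. }
  unfold borel_fun_baire, borel_baire; apply sigma_gen_preimage; intros A (k & v & HA).
  (* Every window with at least 2^k marked points yields the same code. *)
  apply sg_ext with (fun x => exists m, 2 ^ k <= length (marked (Y x) k m) /\
                       code_pairs (firstn (2 ^ k) (sample (Y x) (f x) k m)) = v).
  - intros x; rewrite HA; unfold sample_code, sample_window; split.
    + intros (m & Hm & <-); f_equal; apply firstn_sample_stable; auto using window_spec.
    + intros <-; eexists; split; [apply window_spec | reflexivity].
  - apply sg_union; intros m.
    apply (sigma_gen_depends_below _ _ Y f HYm Hfm m
             (fun y g => 2 ^ k <= length (marked y k m) /\
                         code_pairs (firstn (2 ^ k) (sample y g k m)) = v)).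
    intros y y' g g' Hagree [Hlen Hcode].
    rewrite <- (marked_ext y y'), <- (sample_ext y y' g g'); auto.
    intros i Hi; apply Hagree, Hi.
Qed.

Fixpoint lookup (n : nat) (l : list (nat * nat)) : option nat :=
  match l with
  | [] => None
  | (p, v) :: l' => if p =? n then Some v else lookup n l'
  end.

Lemma lookup_app n l1 l2 :
  lookup n (l1 ++ l2) = match lookup n l1 with Some v => Some v | None => lookup n l2 end.
Proof.
  induction l1 as [|[p v] l1 IH]; simpl; [reflexivity|].
  destruct (p =? n); [reflexivity | exact IH].
Qed.

Lemma lookup_None n l : lookup n l = None <-> ~ In n (map fst l).
Proof.
  induction l as [|[p v] l IH]; simpl; [tauto|].
  destruct (Nat.eqb_spec p n); [split; [discriminate | tauto]|].
  rewrite IH; tauto.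
Qed.

Lemma lookup_Some n l v : lookup n l = Some v -> In (n, v) l.
Proof.
  induction l as [|[p w] l IH]; simpl; [discriminate|].
  destruct (Nat.eqb_spec p n) as [<-|_]; [injection 1 as <-|]; auto.
Qed.

Definition claims_before (claims : nat -> list (nat * nat)) (k : nat) : list (nat * nat) :=
  concat (map claims (seq 0 k)).

Definition guess (claims : nat -> list (nat * nat)) (n : nat) : nat :=
  match lookup n (claims_before claims (S n)) with Some v => v | None => 0 end.

Section Guessing.

Variable claims : nat -> list (nat * nat).
Hypothesis length_claims : forall j, length (claims j) <= 2 ^ j.

Lemma length_claims_before k : length (claims_before claims k) < 2 ^ k.
Proof.
  unfold claims_before; induction k as [|k IH]; [simpl; lia|].
  rewrite seq_S, map_app, concat_app, length_app; simpl.
  rewrite app_nil_r; specialize (length_claims k); lia.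
Qed.

Lemma fresh_claim k :
  NoDup (map fst (claims k)) -> length (claims k) = 2 ^ k ->
  exists p, In p (map fst (claims k)) /\ ~ In p (map fst (claims_before claims k)).
Proof.
  intros Hnd Hlen; apply NNPP; intros Hnone.
  assert (Hincl : incl (map fst (claims k)) (map fst (claims_before claims k))).
  { intros p Hp; apply NNPP; intros Hp'; apply Hnone; exists p; auto. }
  apply NoDup_incl_length in Hincl; [|exact Hnd].
  rewrite !length_map in Hincl; pose proof (length_claims_before k); lia.
Qed.

Lemma guess_fresh_claim k p (h : nat -> nat) :
  k <= p -> (forall v, In (p, v) (claims k) -> v = h p) ->
  In p (map fst (claims k)) -> ~ In p (map fst (claims_before claims k)) ->
  guess claims p = h p.
Proof.
  intros Hkp Hh Hin Hfresh; unfold guess, claims_before.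
  replace (S p) with (k + S (p - k)) by lia.
  rewrite seq_app, map_app, concat_app; simpl; rewrite lookup_app.
  apply lookup_None in Hfresh; unfold claims_before in Hfresh; rewrite Hfresh, lookup_app.
  destruct (lookup p (claims k)) as [v|] eqn:Hv.
  - apply Hh, lookup_Some, Hv.
  - apply lookup_None in Hv; contradiction.
Qed.

End Guessing.

Theorem lemma2p5 (X : (nat -> bool) -> Prop) (HX : nice X)
  (Y : (nat -> bool) -> (nat -> bool)) (f : (nat -> bool) -> (nat -> nat))
  (HY : forall x, infinite_set (Y x))
  (Hborel : borel_fun_prod (fun x => (Y x, f x))) :
  exists g : nat -> nat, forall x, X x ->
    forall N, exists n, N <= n /\ Y x n = true /\ f x n = g n.
Proof.
  destruct (HX _ (sample_code_borel Y f HY Hborel)) as [c Hc].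
  set (claims k := firstn (2 ^ k) (decode_pairs (c k))).
  assert (Hlen : forall j, length (claims j) <= 2 ^ j) by (intros j; apply firstn_le_length).
  exists (guess claims); intros x Hx N.
  destruct (Hc x Hx N) as [k [HNk Hk]].
  assert (Hclaim : claims k = sample_window (Y x) (f x) k (HY x)).
  { unfold claims; rewrite <- Hk; unfold sample_code; rewrite decode_code_pairs.
    unfold sample_window; rewrite firstn_firstn, Nat.min_id; reflexivity. }
  destruct (fresh_claim claims Hlen k) as [p [Hp Hfresh]];
    rewrite ?Hclaim; auto using NoDup_sample_window, length_sample_window.
  destruct (proj1 (in_map_iff _ _ _) Hp) as [[q v] [Hq Hpv]]; simpl in Hq; subst q.
  rewrite Hclaim in Hpv; destruct (In_sample_window _ _ _ _ _ _ Hpv) as (Hkp & HYp & _).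
  exists p; repeat split; [lia | exact HYp |].
  symmetry; apply (guess_fresh_claim claims k p (f x)); auto.
  intros w Hw; rewrite Hclaim in Hw; apply In_sample_window in Hw; tauto.
Qed.
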